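(* Let $C>0$ be a constant such that $\|x\|\le C\|x\|_*$ for all $x\in\mathbb{X}$. Let $f$ satisfy Assumptions (A) and (B), and let $\mathcal{D}$ and $\delta>0$ satisfy Assumption (E) below. Let $\nu>0$, $u\sim\mathcal{D}$, and define \[ \nabla f_\nu(x)=\mathbb{E}_u\Big[\frac{\delta}{\nu}\big(f(x+\nu u)-f(x)\big)u\Big],\qquad \nabla f_\nu(x;\xi)=\frac{\delta}{\nu}\big(f(x+\nu u;\xi)-f(x;\xi)\big)u . \] Then for all $x\in\mathbb{X}$ (and every realisation $\xi$): (a) $\|\nabla f_\nu(x)-\nabla f(x)\|_*\le \frac{\delta\nu C^2L}{2}\mathbb{E}_u[\|u\|_*^3]$; (b) $\mathbb{E}_u[\|\nabla f_\nu(x;\xi)\|_*^2]\le \frac{C^4L^2\delta^2\nu^2}{2}\mathbb{E}_u[\|u\|_*^6]+2\delta^2\mathbb{E}_u[\langle\nabla f(x;\xi),u\rangle^2\|u\|_*^2]$.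
   Context: $\mathbb{X}$ is a finite-dimensional real vector space with inner product $\langle\cdot,\cdot\rangle$ and a norm $\|\cdot\|$, with dual norm $\|g\|_*=\sup_{\|x\|\le1}\langle g,x\rangle$. $f(x)=\mathbb{E}_\xi[f(x;\xi)]$ for functions $f(\cdot;\xi):\mathbb{X}\to\mathbb{R}$. Assumption (A): for every $\xi$, $f(\cdot;\xi)$ is differentiable, $G$-Lipschitz and $\|\nabla f(x;\xi)-\nabla f(y;\xi)\|_*\le L\|x-y\|$ for all $x,y\in\mathbb{X}$. Assumption (B): $\mathbb{E}_\xi[\nabla f(x;\xi)]=\nabla f(x)$ for all $x$. Assumption (E): $\mathcal{D}$ is a probability distribution supported in $\mathbb{X}$ and there is $\delta>0$ such that, for $u\sim\mathcal{D}$, $\mathbb{E}_u[\langle g,u\rangle u]=g/\delta$ for all $g\in\mathbb{X}$. *)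

From HB Require Import structures.
From mathcomp Require Import all_boot all_order all_algebra.
From mathcomp Require Import all_classical all_reals all_analysis.
Set Implicit Arguments. Unset Strict Implicit. Unset Printing Implicit Defensive.
Import Order.TTheory GRing.Theory Num.Theory.
Import numFieldNormedType.Exports.
Local Open Scope classical_set_scope.
Local Open Scope ring_scope.

(* The space X is modelled as 'rV[R]_n with the standard inner product
   (every finite-dimensional real inner product space is isometric to it). *)
Definition dotv (R : realType) (n : nat) (g x : 'rV[R]_n) : R :=
  \sum_(i < n) g 0 i * x 0 i.

Definition is_norm (R : realType) (n : nat) (N : 'rV[R]_n -> R) : Prop :=
  [/\ forall x, N x = 0 -> x = 0,
      forall (a : R) x, N (a *: x) = `|a| * N x
    & forall x y, N (x + y) <= N x + N y].

Definition dual_norm (R : realType) (n : nat) (N : 'rV[R]_n -> R) (g : 'rV[R]_n) : R :=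
  sup [set dotv g x | x in [set x | N x <= 1]].

Definition Eexp (d : measure_display) (T : measurableType d) (R : realType)
  (P : probability T R) (X : T -> R) : \bar R := (\int[P]_w (X w)%:E)%E.

Definition Rexp (d : measure_display) (T : measurableType d) (R : realType)
  (P : probability T R) (X : T -> R) : R := fine (\int[P]_w (X w)%:E)%E.

Definition vexp (d : measure_display) (T : measurableType d) (R : realType) (n : nat)
  (P : probability T R) (V : T -> 'rV[R]_n) : 'rV[R]_n :=
  \row_i Rexp P (fun w => V w 0 i).

(* Let r(h) = f(x + h) - f(x) - <grad f(x), h>. The mean value theorem along [x, x + h]
   and the L-Lipschitz gradient give |r(h)| <= L ||h||^2 / 2, for each f(.; xi) and hence,
   taking expectations, for f.
   (a) Assumption (E) gives grad f(x) = delta E[<grad f(x), u> u], so the bias is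
   E[(delta / nu) r(nu u) u]. Paired with any s of norm at most 1 this is bounded by
   E[(delta / nu) (L nu^2 ||u||^2 / 2) ||u||_*] <= delta nu C^2 L / 2 E[||u||_*^3].
   (b) f(x + nu u; xi) - f(x; xi) = nu <grad f(x; xi), u> + r(nu u) and
   (a + b)^2 <= 2 a^2 + 2 b^2 bound the squared dual norm pointwise; then integrate.
   All integrands are measurable because they are Lipschitz in the coordinates of u. *)

From HB Require Import structures.
From mathcomp Require Import all_boot all_order all_algebra.
From mathcomp Require Import all_classical all_reals all_analysis.
From mathcomp Require Import measurable_realfun lra ring.
Set Implicit Arguments. Unset Strict Implicit. Unset Printing Implicit Defensive.
Import Order.TTheory GRing.Theory Num.Theory.
Import numFieldNormedType.Exports.
Local Open Scope classical_set_scope.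
Local Open Scope ring_scope.

Section InnerProduct.
Variables (R : realType) (n : nat).
Implicit Types (g h x y : 'rV[R]_n).

Lemma dotvC g x : dotv g x = dotv x g.
Proof. by apply: eq_bigr => i _; rewrite mulrC. Qed.

Lemma dotvDl g h x : dotv (g + h) x = dotv g x + dotv h x.
Proof. by rewrite /dotv -big_split; apply: eq_bigr => i _; rewrite mxE mulrDl. Qed.

Lemma dotvBl g h x : dotv (g - h) x = dotv g x - dotv h x.
Proof. by rewrite /dotv -sumrB; apply: eq_bigr => i _; rewrite !mxE mulrBl. Qed.

Lemma dotvZl a g x : dotv (a *: g) x = a * dotv g x.
Proof. by rewrite /dotv mulr_sumr; apply: eq_bigr => i _; rewrite mxE mulrA. Qed.

Lemma dotvZr a g x : dotv g (a *: x) = a * dotv g x.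
Proof. by rewrite dotvC dotvZl dotvC. Qed.

Lemma dotvNr g x : dotv g (- x) = - dotv g x.
Proof. by rewrite -scaleN1r dotvZr mulN1r. Qed.

Lemma dotv0l x : dotv 0 x = 0.
Proof. by rewrite -(scale0r 0) dotvZl mul0r. Qed.

Lemma dotv0r g : dotv g 0 = 0.
Proof. by rewrite dotvC dotv0l. Qed.

Lemma dotv_delta i g : dotv 'e_i g = g 0 i.
Proof.
rewrite /dotv (bigD1 i) //= big1 ?addr0; first by rewrite mxE !eqxx mul1r.
by move=> j ji; rewrite mxE (negbTE ji) andbF mul0r.
Qed.

End InnerProduct.

Lemma sublinear_le_sum_coord (R : realType) (n : nat) (phi : 'rV[R]_n -> R) :
  phi 0 = 0 -> (forall x y, phi (x + y) <= phi x + phi y) ->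
  (forall a x, phi (a *: x) <= `|a| * phi x) ->
  forall x, phi x <= (\sum_(j < n) phi 'e_j) * \sum_(i < n) `|x 0 i|.
Proof.
move=> phi0 phiD phiZ x.
have phi_ge0 y : 0 <= phi y.
  have := phiD y (- y); rewrite subrr phi0 -scaleN1r.
  have := phiZ (-1) y; rewrite normrN normr1 mul1r; lra.
have phix : phi x <= \sum_(i < n) `|x 0 i| * phi 'e_i.
  rewrite {1}(row_sum_delta x).
  apply: (big_ind2 (fun v r => phi v <= r)) => [|v1 r1 v2 r2 h1 h2|i _].
  - by rewrite phi0.
  - by rewrite (le_trans (phiD _ _)) // lerD.
  - exact: phiZ.
rewrite (le_trans phix) // mulr_sumr ler_sum // => i _.
by rewrite mulrC ler_wpM2r // (bigD1 i) //= lerDl sumr_ge0.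
Qed.

Section Norm.
Variables (R : realType) (n : nat) (N : 'rV[R]_n -> R).
Hypothesis hN : is_norm N.

Lemma isnorm_eq0 x : N x = 0 -> x = 0.
Proof. by case: hN => + _ _; apply. Qed.

Lemma isnormZ a x : N (a *: x) = `|a| * N x.
Proof. by case: hN => _ + _; apply. Qed.

Lemma isnorm_triangle x y : N (x + y) <= N x + N y.
Proof. by case: hN => _ _; apply. Qed.

Lemma isnorm0 : N 0 = 0.
Proof. by rewrite -(scale0r (0 : 'rV[R]_n)) isnormZ normr0 mul0r. Qed.

Lemma isnormN x : N (- x) = N x.
Proof. by rewrite -scaleN1r isnormZ normrN normr1 mul1r. Qed.

Lemma isnorm_ge0 x : 0 <= N x.
Proof. by have := isnorm_triangle x (- x); rewrite subrr isnorm0 isnormN; lra. Qed.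

Lemma isnorm_le_sum_coord x : N x <= (\sum_(j < n) N 'e_j) * \sum_(i < n) `|x 0 i|.
Proof.
by apply: sublinear_le_sum_coord; [exact: isnorm0 | exact: isnorm_triangle |
  move=> a y; rewrite isnormZ].
Qed.

End Norm.

Section DualNorm.
Variables (R : realType) (n : nat) (N : 'rV[R]_n -> R) (C : R).
Hypotheses (hN : is_norm N) (hNC : forall x, N x <= C * dual_norm N x).
Local Notation D := (dual_norm N).

Lemma dotv_unit_ball_neq0 g : [set dotv g x | x in [set x | N x <= 1]] !=set0.
Proof. by exists 0, 0; rewrite /= ?(isnorm0 hN) ?ler01 ?dotv0r. Qed.

(* Without an upper bound the supremum would be the junk value 0, which the
   comparison [N <= C * D] rules out for every g <> 0. *)
Lemma dual_norm_has_sup g : has_sup [set dotv g x | x in [set x | N x <= 1]].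
Proof.
split; first exact: dotv_unit_ball_neq0.
apply: contrapT => unbounded.
have g0 : g = 0.
  apply: (isnorm_eq0 hN); apply/eqP; rewrite eq_le isnorm_ge0 // andbT.
  have Dg0 : D g = 0 by rewrite /dual_norm sup_out // => -[].
  by have := hNC g; rewrite Dg0 mulr0.
by apply: unbounded; exists 0 => _ [x _ <-]; rewrite g0 dotv0l.
Qed.

Lemma dotv_le_dual_norm g x : N x <= 1 -> dotv g x <= D g.
Proof. by move=> Nx; apply: sup_upper_bound; [exact: dual_norm_has_sup | exists x]. Qed.

Lemma dual_norm_le g M : (forall x, N x <= 1 -> dotv g x <= M) -> D g <= M.
Proof.
move=> gM; apply: ge_sup; first exact: dotv_unit_ball_neq0.
by move=> _ [x Nx <-]; exact: gM.
Qed.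

Lemma dual_norm_ge0 g : 0 <= D g.
Proof. by rewrite -(dotv0r g); apply: dotv_le_dual_norm; rewrite (isnorm0 hN). Qed.

Lemma dual_norm0 : D 0 = 0.
Proof.
by apply/eqP; rewrite eq_le dual_norm_ge0 andbT; apply: dual_norm_le => x _; rewrite dotv0l.
Qed.

Lemma dotv_le_dual_normM g x : dotv g x <= D g * N x.
Proof.
have [/(isnorm_eq0 hN) ->|Nx0] := eqVneq (N x) 0.
  by rewrite dotv0r (isnorm0 hN) mulr0.
have Nx_gt0 : 0 < N x by rewrite lt_def Nx0 isnorm_ge0.
rewrite -ler_pdivrMr // mulrC -dotvZr dotv_le_dual_norm // isnormZ //.
by rewrite ger0_norm ?invr_ge0 ?isnorm_ge0 // mulVf.
Qed.

Lemma abs_dotv_le g x : `|dotv g x| <= D g * N x.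
Proof.
rewrite ler_norml dotv_le_dual_normM andbT lerNl -dotvNr -[N x](isnormN hN).
exact: dotv_le_dual_normM.
Qed.

Lemma norm_sqr_le_dual x : N x ^+ 2 <= C ^+ 2 * D x ^+ 2.
Proof. by have := hNC x; have := isnorm_ge0 hN x; nra. Qed.

Lemma dual_normZ_le a g : D (a *: g) <= `|a| * D g.
Proof.
apply: dual_norm_le => x Nx; rewrite dotvZl (le_trans (ler_norm _)) // normrM.
rewrite ler_wpM2l // (le_trans (abs_dotv_le _ _)) //.
by rewrite ler_piMr ?dual_norm_ge0.
Qed.

Lemma dual_norm_triangle g h : D (g + h) <= D g + D h.
Proof.
apply: dual_norm_le => x Nx; rewrite dotvDl.
by rewrite lerD // dotv_le_dual_norm.
Qed.

Lemma dual_norm_lipschitz g h :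
  D g <= D h + (\sum_(j < n) D 'e_j) * \sum_(i < n) `|g 0 i - h 0 i|.
Proof.
have -> : \sum_(i < n) `|g 0 i - h 0 i| = \sum_(i < n) `|(g - h) 0 i|.
  by apply: eq_bigr => i _; rewrite !mxE.
rewrite -[g in D g](subrK h) addrC (le_trans (dual_norm_triangle _ _)) // lerD2l.
by apply: sublinear_le_sum_coord; [exact: dual_norm0 | exact: dual_norm_triangle |
  exact: dual_normZ_le].
Qed.

End DualNorm.

Lemma rat_row_approx (R : realType) (n : nat) (a : 'rV[R]_n) (e : R) : 0 < e ->
  exists q : 'rV[rat]_n, \sum_(i < n) `|a 0 i - ratr (q 0 i)| < e.
Proof.
move=> e0; set e' := e / (n%:R + 1).
have e'0 : 0 < e' by rewrite divr_gt0 // ltr_wpDl.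
have near_rat i : exists r : rat, `|a 0 i - ratr r| < e'.
  have ball_neq0 : ball (a 0 i) e' !=set0 by exists (a 0 i); exact: ballxx.
  have [z [near [r _ rE]]] := dense_rat ball_neq0 (ball_open _ _).
  by exists r; move: near; rewrite -rE -ball_normE.
have [q hq] := choice near_rat; exists (\row_i q i).
apply: (@le_lt_trans _ _ (\sum_(i < n) e')).
  by apply: ler_sum => i _; rewrite mxE ltW.
rewrite sumr_const card_ord -mulr_natr /e' mulrAC ltr_pdivrMr ?ltr_wpDl //.
by rewrite ltr_pM2l // ltrDl.
Qed.

Lemma measurable_comp_lipschitz d (T : measurableType d) (R : realType) (n : nat)
  (phi : 'rV[R]_n -> R) (K : R) :
  (forall a b, phi a <= phi b + K * \sum_(i < n) `|a 0 i - b 0 i|) ->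
  forall v : T -> 'rV[R]_n, (forall i, measurable_fun setT (fun w => v w 0 i)) ->
  measurable_fun setT (fun w => phi (v w)).
Proof.
move=> phiK v mv.
have {}phiK a b : phi a <= phi b + `|K| * \sum_(i < n) `|a 0 i - b 0 i|.
  by rewrite (le_trans (phiK a b)) // lerD2l ler_wpM2r ?sumr_ge0 ?ler_norm.
pose q (k : nat) : 'rV[R]_n :=
  if unpickle k is Some r then map_mx ratr (r : 'rV[rat]_n) else 0.
pose bound k w := phi (q k) + `|K| * \sum_(i < n) `|v w 0 i - q k 0 i|.
have mbound k : measurable_fun setT (bound k).
  apply: measurable_funD => //; apply: measurable_funM => //.
  by apply: measurable_sum => i; apply: measurableT_comp => //; exact: measurable_funB.
apply: (measurability _ (RGenInftyO.measurableE R)) => //.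
move=> _ [_ [y ->] <-].
(* [phi (v w)] is the infimum of the upper bounds [bound k w] over rational rows. *)
have -> : setT `&` (fun w => phi (v w)) @^-1` `]-oo, y[ =
    \bigcup_k (setT `&` bound k @^-1` `]-oo, y[).
  apply/seteqP; split => w /=; last first.
    by move=> [k _ [_]]; rewrite /= !in_itv /= => /(le_lt_trans (phiK _ _)).
  move=> [_]; rewrite /= in_itv /= => phi_lt.
  have K1 : 0 < 2 * `|K| + 1 by rewrite ltr_wpDl ?mulr_ge0.
  have e0 : 0 < (y - phi (v w)) / (2 * `|K| + 1) by rewrite divr_gt0 ?subr_gt0.
  have [r hr] := rat_row_approx (v w) e0.
  exists (pickle r) => //; split => //=; rewrite in_itv /= /bound /q pickleK.
  set s := \sum_(i < n) _.
  have hs : \sum_(i < n) `|v w 0 i - ratr (r 0 i)| = s.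
    by apply: eq_bigr => i _; rewrite mxE.
  have hphi := phiK (map_mx ratr r) (v w).
  rewrite (_ : \sum_(i < n) _ = s) in hphi; last first.
    by apply: eq_bigr => i _; rewrite distrC.
  rewrite hs (ltr_pdivlMr _ _ K1) in hr.
  have s0 : 0 <= s by rewrite sumr_ge0.
  by have := normr_ge0 K; nra.
by apply: bigcup_measurable => k _; exact: mbound k measurableT _ (measurable_itv _).
Qed.

Lemma measurable_dotv d (T : measurableType d) (R : realType) (n : nat)
  (v : 'rV[R]_n) (V : T -> 'rV[R]_n) :
  (forall i, measurable_fun setT (fun w => V w 0 i)) ->
  measurable_fun setT (fun w => dotv v (V w)).
Proof. by move=> mV; apply: measurable_sum => i; exact: measurable_funM. Qed.

Lemma taylor1_abs_le (R : realType) (p p' : R -> R) (a K : R) :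
  (forall t : R, is_derive t (1 : R) p (p' t)) ->
  (forall t, 0 < t < 1 -> `|p' t - a| <= K * t) ->
  `|p 1 - p 0 - a| <= K / 2.
Proof.
move=> dp p'_near.
have mvt (s : R) : exists2 t, 0 < t < 1 &
    p 1 - p 0 - a - s * (K / 2) = p' t - a - s * K * t.
  pose q := p - (a \*: id + (s * (K / 2)) \*: (id * id)).
  have dq (t : R) : is_derive t (1 : R) q
      (p' t - (a *: 1 + (s * (K / 2)) *: (id t *: 1 + id t *: 1))).
    exact: is_deriveB.
  have [t t01 qE] := MVT ltr01 (fun t _ => dq t)
    (derivable_within_continuous (fun t _ => @ex_derive _ _ _ _ _ _ _ (dq t))).
  exists t; first by move: t01; rewrite in_itv.
  have scaleE (c r : R) : c *: r = c * r by [].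
  rewrite (_ : p 1 - p 0 - a - s * (K / 2) = q 1 - q 0); last first.
    by rewrite /q !fctE /= !scaleE; ring.
  by rewrite qE /= !scaleE; field.
have [t1 /p'_near + E1] := mvt 1.
have [t2 /p'_near + E2] := mvt (-1).
rewrite !ler_norml => /andP[l1 u1] /andP[l2 u2].
by apply/andP; split; lra.
Qed.

Section TaylorRemainder.
Variables (R : realType) (n : nat) (N : 'rV[R]_n -> R) (C L : R).
Hypotheses (hN : is_norm N) (hNC : forall x, N x <= C * dual_norm N x).
Variables (phi : 'rV[R]_n -> R) (g : 'rV[R]_n -> 'rV[R]_n).
Hypotheses (phi_diff : forall y, differentiable phi y)
  (phi_grad : forall y h, 'd phi y h = dotv (g y) h)
  (g_lip : forall a b, dual_norm N (g a - g b) <= L * N (a - b)).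

Lemma is_derive_along_line x h (t : R) :
  is_derive t (1 : R) (fun s => phi (x + s *: h)) (dotv (g (x + t *: h)) h).
Proof.
have shiftE : (fun s : R => s^-1 *: (((fun s => phi (x + s *: h)) \o shift t) (s *: 1)
                 - phi (x + t *: h)))
    = (fun s : R => s^-1 *: ((phi \o shift (x + t *: h)) (s *: h) - phi (x + t *: h))).
  apply/funext => s /=; congr (_ *: (phi _ - _)).
  by rewrite /shift /= -[s%:A]/(s * 1) mulr1 scalerDl addrCA addrA.
split; first by rewrite /derivable shiftE; exact: (diff_derivable (phi_diff _)).
by rewrite /derive shiftE -/(derive phi _ h) deriveE // phi_grad.
Qed.

Lemma taylor_remainder_le x h : `|phi (x + h) - phi x - dotv (g x) h| <= L * N h ^+ 2 / 2.
Proof.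
have := taylor1_abs_le (is_derive_along_line x h) (a := dotv (g x) h) (K := L * N h ^+ 2).
rewrite scale1r scale0r addr0; apply => t /andP[t0 _].
rewrite -dotvBl (le_trans (abs_dotv_le hN hNC _ _)) //.
rewrite (le_trans (ler_wpM2r (isnorm_ge0 hN h) (g_lip _ _))) //.
rewrite addrAC subrr add0r isnormZ // (ger0_norm (ltW t0)).
by rewrite (_ : L * (t * N h) * N h = L * N h ^+ 2 * t) //; ring.
Qed.

End TaylorRemainder.

Section Expectation.
Variables (d : measure_display) (T : measurableType d) (R : realType).
Variable P : probability T R.
Local Notation integrable f := (P.-integrable setT (EFin \o f)).

Lemma RexpE (f : T -> R) : Rexp P f = \int[P]_(w in setT) f w.
Proof. by []. Qed.

Lemma integrableMr_EFin (f : T -> R) (k : R) :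
  integrable f -> integrable (fun w => f w * k).
Proof.
by move=> If; apply: eq_integrable (integrableZr measurableT k If).
Qed.

Lemma integrable_sum_EFin (I : Type) (s : seq I) (f : I -> T -> R) :
  (forall i, integrable (f i)) -> integrable (fun w => \sum_(i <- s) f i w).
Proof.
move=> If; apply: eq_integrable (integrable_sum measurableT s (fun i _ => If i)) => //.
by move=> w _; rewrite /= sumEFin.
Qed.

Lemma Rexp_sum (I : Type) (s : seq I) (f : I -> T -> R) :
  (forall i, integrable (f i)) ->
  Rexp P (fun w => \sum_(i <- s) f i w) = \sum_(i <- s) Rexp P (f i).
Proof.
move=> If; elim: s => [|i s IH].
  by rewrite big_nil RexpE; under eq_Rintegral do rewrite big_nil;
    rewrite Rintegral_cst // mul0r.
rewrite big_cons -IH !RexpE -RintegralD //; last exact: integrable_sum_EFin.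
by apply: eq_Rintegral => w _; rewrite big_cons.
Qed.

Lemma RexpB (f h : T -> R) : integrable f -> integrable h ->
  Rexp P (fun w => f w - h w) = Rexp P f - Rexp P h.
Proof. by move=> If Ih; rewrite !RexpE RintegralB. Qed.

Lemma Rexp_abs_le (f : T -> R) (c : R) :
  integrable f -> (forall w, `|f w| <= c) -> `|Rexp P f| <= c.
Proof.
move=> If fc; rewrite RexpE (le_trans (le_normr_Rintegral _ _)) //.
rewrite (@le_trans _ _ (\int[P]_(w in setT) c)) //.
  apply: le_Rintegral => //; [exact: integrable_norm |
    exact: finite_measure_integrable_cst].
by rewrite Rintegral_cst //= probability_setT mulr1.
Qed.

Lemma Rexp_le_integral (f h : T -> R) : integrable f -> measurable_fun setT h ->
  (forall w, `|f w| <= h w) -> ((Rexp P f)%:E <= \int[P]_w (h w)%:E)%E.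
Proof.
move=> If mh fh; have mf : measurable_fun setT f.
  by apply/measurable_EFinP; exact: measurable_int If.
rewrite /Rexp fineK; last exact: integrable_fin_num.
rewrite (le_trans (lee_abs _)) // (le_trans (le_abse_integral _ _ _)) //.
  exact/measurable_EFinP.
apply: ge0_le_integral => //; first by apply/measurable_EFinP; exact: measurableT_comp.
- exact/measurable_EFinP.
- by move=> w _; rewrite lee_fin.
Qed.

Lemma integrableZl_EFin (k : R) (f : T -> R) :
  integrable f -> integrable (fun w => k * f w).
Proof. by move=> If; apply: eq_integrable (integrableZl measurableT k If). Qed.

Lemma integrableB_EFin (f h : T -> R) :
  integrable f -> integrable h -> integrable (fun w => f w - h w).
Proof. by move=> If Ih; apply: eq_integrable (integrableB measurableT If Ih). Qed.

Section NonnegativeExpectation.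
Variables f h : T -> R.
Hypotheses (mf : measurable_fun setT f) (mh : measurable_fun setT h).
Hypotheses (f0 : forall w, 0 <= f w) (h0 : forall w, 0 <= h w).

Lemma EexpZ (c : R) : 0 <= c -> Eexp P (fun w => c * f w) = (c%:E * Eexp P f)%E.
Proof.
move=> c0; rewrite /Eexp -ge0_integralZl_EFin //; last exact/measurable_EFinP.
by move=> w _; rewrite lee_fin.
Qed.

Lemma EexpD : Eexp P (fun w => f w + h w) = (Eexp P f + Eexp P h)%E.
Proof.
rewrite /Eexp -ge0_integralD //; try exact/measurable_EFinP.
- by move=> w _; rewrite lee_fin.
- by move=> w _; rewrite lee_fin.
Qed.

Lemma le_Eexp : (forall w, f w <= h w) -> (Eexp P f <= Eexp P h)%E.
Proof.
move=> fh; apply: ge0_le_integral => //; try exact/measurable_EFinP.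
- by move=> w _; rewrite lee_fin.
- by move=> w _; rewrite lee_fin.
Qed.

End NonnegativeExpectation.

Variable n : nat.
Local Notation integrable_row V := (forall i, integrable (fun w => V w 0 i)).

Lemma integrable_dotv (V : T -> 'rV[R]_n) (s : 'rV[R]_n) :
  integrable_row V -> integrable (fun w => dotv (V w) s).
Proof. by move=> IV; apply: integrable_sum_EFin => i; exact: integrableMr_EFin. Qed.

Lemma Rexp_dotv (V : T -> 'rV[R]_n) (s : 'rV[R]_n) :
  integrable_row V -> Rexp P (fun w => dotv (V w) s) = dotv (vexp P V) s.
Proof.
move=> IV; rewrite /dotv Rexp_sum => [|i]; last exact: integrableMr_EFin.
by apply: eq_bigr => i _; rewrite mxE !RexpE RintegralZr.
Qed.

Lemma vexpB (V W : T -> 'rV[R]_n) : integrable_row V -> integrable_row W ->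
  vexp P (fun w => V w - W w) = vexp P V - vexp P W.
Proof.
move=> IV IW; apply/rowP => i; rewrite !mxE !RexpE -RintegralB //.
by apply: eq_Rintegral => w _; rewrite !mxE.
Qed.

Lemma vexpZ (k : R) (V : T -> 'rV[R]_n) : integrable_row V ->
  vexp P (fun w => k *: V w) = k *: vexp P V.
Proof.
move=> IV; apply/rowP => i; rewrite !mxE !RexpE -RintegralZl //.
by apply: eq_Rintegral => w _; rewrite !mxE.
Qed.

End Expectation.

Section DualNormExpectation.
Variables (R : realType) (n : nat) (N : 'rV[R]_n -> R) (C : R).
Hypotheses (hN : is_norm N) (hNC : forall x, N x <= C * dual_norm N x).
Variables (d : measure_display) (T : measurableType d) (P : probability T R).

Lemma measurable_dual_norm (V : T -> 'rV[R]_n) :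
  (forall i, measurable_fun setT (fun w => V w 0 i)) ->
  measurable_fun setT (fun w => dual_norm N (V w)).
Proof. exact/measurable_comp_lipschitz/(dual_norm_lipschitz hN hNC). Qed.

Lemma dual_norm_vexp_le (V : T -> 'rV[R]_n) (H : T -> R) :
  (forall i, P.-integrable setT (EFin \o (fun w => V w 0 i))) ->
  measurable_fun setT H ->
  (forall s w, N s <= 1 -> `|dotv (V w) s| <= H w) ->
  ((dual_norm N (vexp P V))%:E <= \int[P]_w (H w)%:E)%E.
Proof.
move=> IV mH VH.
have H0 w : 0 <= H w by rewrite (le_trans _ (VH 0 w _)) ?(isnorm0 hN) ?ler01.
have : (0 <= \int[P]_w (H w)%:E)%E by apply: integral_ge0 => w _; rewrite lee_fin.
case intH : (\int[P]_w _)%E => [m| |] // _; last exact: leey.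
rewrite lee_fin; apply: (dual_norm_le hN) => s Ns.
rewrite -Rexp_dotv // -lee_fin -intH; apply: Rexp_le_integral => //.
  exact: integrable_dotv.
by move=> w; exact: VH.
Qed.

End DualNormExpectation.

Definition gradient_estimate (R : realType) (n : nat) (phi : 'rV[R]_n -> R)
  (delta nu : R) (x h : 'rV[R]_n) : 'rV[R]_n :=
  (delta / nu * (phi (x + nu *: h) - phi x)) *: h.

Section GradientEstimate.
Variables (R : realType) (n : nat) (N : 'rV[R]_n -> R) (C : R).
Hypotheses (hN : is_norm N) (hNC : forall x, N x <= C * dual_norm N x).
Local Notation D := (dual_norm N).
Variables (phi : 'rV[R]_n -> R) (g x : 'rV[R]_n) (G L delta nu : R).
Hypotheses (hdelta : 0 < delta) (hnu : 0 < nu).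
Hypothesis phi_lip : forall a b, `|phi a - phi b| <= G * N (a - b).
Hypothesis phi_rem : forall h, `|phi (x + h) - phi x - dotv g h| <= L * N h ^+ 2 / 2.
Local Notation est := (gradient_estimate phi delta nu x).

Lemma remainder_neg_trivial : L < 0 -> forall h : 'rV[R]_n, h = 0.
Proof.
move=> L0 h; apply: (isnorm_eq0 hN); apply/eqP; rewrite eq_le isnorm_ge0 // andbT.
have := le_trans (normr_ge0 _) (phi_rem h).
by rewrite pmulr_lge0 ?invr_gt0 // nmulr_rge0 // expr2; nra.
Qed.

Lemma gradient_estimate_bias_le s h : N s <= 1 ->
  `|dotv (est h - (delta * dotv g h) *: h) s| <= delta * nu * C ^+ 2 * L / 2 * D h ^+ 3.
Proof.
move=> Ns; have [L0|/remainder_neg_trivial v0] := leP 0 L; last first.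
  by rewrite (v0 (_ - _)) dotv0l normr0 (v0 h) (dual_norm0 hN hNC) expr0n /= mulr0.
set r := phi (x + nu *: h) - phi x - dotv g (nu *: h).
have estE : est h - (delta * dotv g h) *: h = (delta / nu * r) *: h.
  rewrite /gradient_estimate /r dotvZr -scalerBl; congr (_ *: _).
  by field; rewrite gt_eqF.
have r_le : `|r| <= L * (nu ^+ 2 * (C ^+ 2 * D h ^+ 2)) / 2.
  rewrite (le_trans (phi_rem _)) // isnormZ // gtr0_norm // exprMn.
  by rewrite ler_wpM2r // ler_wpM2l // ler_wpM2l ?sqr_ge0 // (norm_sqr_le_dual hN hNC).
have dotv_le : `|dotv h s| <= D h.
  by rewrite (le_trans (abs_dotv_le hN hNC _ _)) // ler_piMr // (dual_norm_ge0 hN hNC).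
rewrite estE dotvZl normrM normrM (gtr0_norm (divr_gt0 hdelta hnu)) -mulrA.
have est_ge0 : 0 <= delta / nu by rewrite divr_ge0 ?ltW.
rewrite (le_trans (ler_wpM2l est_ge0 (ler_pM (normr_ge0 _) (normr_ge0 _) r_le dotv_le))) //.
by rewrite [X in X <= _](_ : _ = delta * nu * C ^+ 2 * L / 2 * D h ^+ 3) //; field;
  rewrite gt_eqF.
Qed.

Lemma gradient_estimate_sqr_le h :
  D (est h) ^+ 2 <= C ^+ 4 * L ^+ 2 * delta ^+ 2 * nu ^+ 2 / 2 * D h ^+ 6
                    + 2 * delta ^+ 2 * (dotv g h ^+ 2 * D h ^+ 2).
Proof.
set q := D h; set r := phi (x + nu *: h) - phi x - nu * dotv g h.
have q0 : 0 <= q := dual_norm_ge0 hN hNC h.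
have sqr_normr (y : R) : `|y| ^+ 2 = y ^+ 2 := real_normK (num_real y).
have est_le : D (est h) ^+ 2 <= (delta / nu) ^+ 2 * (nu * dotv g h + r) ^+ 2 * q ^+ 2.
  have estE : est h = (delta / nu * (nu * dotv g h + r)) *: h.
    by rewrite /gradient_estimate /r; congr (_ *: _); ring.
  have D_le : D (est h) <= `|delta / nu * (nu * dotv g h + r)| * q.
    by rewrite estE; exact: dual_normZ_le.
  rewrite -exprMn -(sqr_normr (delta / nu * _)) -exprMn.
  by rewrite lerXn2r ?nnegrE ?(dual_norm_ge0 hN hNC) ?mulr_ge0.
have r_le : r ^+ 2 <= L ^+ 2 * nu ^+ 4 / 4 * (C ^+ 2 * q ^+ 2) ^+ 2.
  have := phi_rem (nu *: h); rewrite dotvZr -/r isnormZ // (gtr0_norm hnu) => r_le.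
  have nneg_bound := le_trans (normr_ge0 r) r_le.
  rewrite -sqr_normr (le_trans (lerXn2r 2 _ _ r_le)) ?nnegrE //.
  rewrite (_ : (L * (nu * N h) ^+ 2 / 2) ^+ 2 = L ^+ 2 * nu ^+ 4 / 4 * (N h ^+ 2) ^+ 2).
    have c0 : 0 <= L ^+ 2 * nu ^+ 4 / 4.
      by rewrite divr_ge0 // mulr_ge0 ?sqr_ge0 // exprn_ge0 // ltW.
    rewrite ler_wpM2l // lerXn2r ?nnegrE ?sqr_ge0 ?(mulr_ge0 (sqr_ge0 _) (sqr_ge0 _)) //.
    exact: (norm_sqr_le_dual hN hNC).
  by field.
have sum_sqr : (nu * dotv g h + r) ^+ 2 <= 2 * (nu * dotv g h) ^+ 2 + 2 * r ^+ 2.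
  by have := sqr_ge0 (nu * dotv g h - r); nra.
have w0 : 0 <= (delta / nu) ^+ 2 * q ^+ 2 := mulr_ge0 (sqr_ge0 _) (sqr_ge0 _).
have := ler_wpM2l w0 sum_sqr; have := ler_wpM2l w0 r_le.
have -> : (delta / nu) ^+ 2 * q ^+ 2 * (2 * (nu * dotv g h) ^+ 2 + 2 * r ^+ 2)
    = 2 * delta ^+ 2 * (dotv g h ^+ 2 * q ^+ 2) + 2 * ((delta / nu) ^+ 2 * q ^+ 2 * r ^+ 2).
  by field; rewrite gt_eqF.
have -> : (delta / nu) ^+ 2 * q ^+ 2 * (L ^+ 2 * nu ^+ 4 / 4 * (C ^+ 2 * q ^+ 2) ^+ 2)
    = C ^+ 4 * L ^+ 2 * delta ^+ 2 * nu ^+ 2 / 2 * q ^+ 6 / 2.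
  by field; rewrite gt_eqF.
rewrite mulrAC in est_le; lra.
Qed.

Variables (d : measure_display) (T : measurableType d) (P : probability T R).
Variable u : T -> 'rV[R]_n.
Hypothesis u_meas : forall i, measurable_fun setT (fun w => u w 0 i).

Lemma measurable_phi_shift : measurable_fun setT (fun w => phi (x + nu *: u w)).
Proof.
apply: (@measurable_comp_lipschitz _ _ _ _ _ (`|G| * \sum_(j < n) N 'e_j)) => [a b|i].
  rewrite -lerBlDl (le_trans (ler_norm _)) // (le_trans (phi_lip _ _)) // -mulrA.
  rewrite (le_trans (ler_wpM2r (isnorm_ge0 hN _) (ler_norm G))) // ler_wpM2l //.
  rewrite (_ : \sum_(i < n) `|a 0 i - b 0 i| = \sum_(i < n) `|(a - b) 0 i|).
    exact: isnorm_le_sum_coord.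
  by apply: eq_bigr => i _; rewrite !mxE.
under eq_fun do rewrite !mxE.
by apply: measurable_funD => //; exact: measurable_funM.
Qed.

Lemma measurable_gradient_estimate i :
  measurable_fun setT (fun w => est (u w) 0 i).
Proof.
under eq_fun do rewrite /gradient_estimate mxE.
apply: measurable_funM => //; apply: measurable_funM => //.
by apply: measurable_funB => //; exact: measurable_phi_shift.
Qed.

Lemma smoothed_gradient_second_moment_le :
  (Eexp P (fun w => D (est (u w)) ^+ 2)%R
   <= (C ^+ 4 * L ^+ 2 * delta ^+ 2 * nu ^+ 2 / 2)%:E * Eexp P (fun w => D (u w) ^+ 6)%R
      + (2 * delta ^+ 2)%:E * Eexp P (fun w => dotv g (u w) ^+ 2 * D (u w) ^+ 2)%R)%E.
Proof.
have mD := measurable_dual_norm hN hNC u_meas.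
have mdotv := measurable_dotv g u_meas.
have c1 : 0 <= C ^+ 4 * L ^+ 2 * delta ^+ 2 * nu ^+ 2 / 2.
  have -> : C ^+ 4 * L ^+ 2 * delta ^+ 2 * nu ^+ 2 = (C ^+ 2 * L * delta * nu) ^+ 2.
    by ring.
  by rewrite divr_ge0 ?sqr_ge0.
have c2 : 0 <= 2 * delta ^+ 2 by rewrite mulr_ge0 ?sqr_ge0.
have mD6 : measurable_fun setT (fun w => D (u w) ^+ 6) by exact: measurable_funX.
have mdD : measurable_fun setT (fun w => dotv g (u w) ^+ 2 * D (u w) ^+ 2).
  by apply: measurable_funM; exact: measurable_funX.
have D6_ge0 w : 0 <= D (u w) ^+ 6 by rewrite exprn_ge0 // (dual_norm_ge0 hN hNC).
have dD_ge0 w : 0 <= dotv g (u w) ^+ 2 * D (u w) ^+ 2 by rewrite mulr_ge0 ?sqr_ge0.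
rewrite -(EexpZ P mD6 D6_ge0 c1) -(EexpZ P mdD dD_ge0 c2) -EexpD.
- apply: le_Eexp => [|||w]; last exact: gradient_estimate_sqr_le.
  + apply: measurable_funX; apply: (measurable_dual_norm hN hNC) => i.
    exact: measurable_gradient_estimate.
  + by apply: measurable_funD; exact: measurable_funM.
  + by move=> w; exact: sqr_ge0.
- exact: measurable_funM.
- exact: measurable_funM.
- by move=> w; rewrite mulr_ge0.
- by move=> w; rewrite mulr_ge0.
Qed.

Hypothesis E_int : forall v i, P.-integrable setT (fun w => (dotv v (u w) * u w 0 i)%:E).
Hypothesis E_eq : forall v, vexp P (fun w => dotv v (u w) *: u w) = delta^-1 *: v.

Lemma integrable_gradient_estimate i :
  P.-integrable setT (EFin \o (fun w => est (u w) 0 i)).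
Proof.
set M := \sum_(j < n) N 'e_j.
have M0 : 0 <= M by apply: sumr_ge0 => j _; exact: isnorm_ge0.
pose S w := \sum_(j < n) `|u w 0 j|.
have S0 w : 0 <= S w by exact: sumr_ge0.
have bound_int : P.-integrable setT
    (EFin \o (fun w => S w * `|u w 0 i| * (delta * `|G| * M))).
  apply: integrableMr_EFin; apply: eq_integrable (integrable_sum_EFin (index_enum _)
    (fun j => integrable_norm (E_int 'e_j i))) => // w _.
  by rewrite /= /S mulr_suml; congr EFin; apply: eq_bigr => j _; rewrite dotv_delta normrM.
apply: le_integrable bound_int => //.
  by apply/measurable_EFinP; exact: measurable_gradient_estimate.
move=> w _; rewrite /= !lee_fin [X in _ <= X]ger0_norm; last first.
  exact: mulr_ge0 (mulr_ge0 (S0 w) (normr_ge0 _)) (mulr_ge0 (mulr_ge0 (ltW hdelta) _) M0).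
have phi_le : `|phi (x + nu *: u w) - phi x| <= nu * (`|G| * M * S w).
  rewrite (le_trans (phi_lip _ _)) // addrAC subrr add0r isnormZ // (gtr0_norm hnu).
  rewrite mulrCA ler_pM2l // -mulrA.
  rewrite (le_trans (ler_wpM2r (isnorm_ge0 hN _) (ler_norm G))) // ler_wpM2l //.
  exact: isnorm_le_sum_coord.
rewrite /gradient_estimate mxE normrM normrM (gtr0_norm (divr_gt0 hdelta hnu)).
rewrite [X in _ <= X]mulrAC ler_wpM2r //.
rewrite (le_trans (ler_wpM2l (divr_ge0 (ltW hdelta) (ltW hnu)) phi_le)) //.
by rewrite [X in X <= _](_ : _ = S w * (delta * `|G| * M)) //; field; rewrite gt_eqF.
Qed.

Lemma integrable_directional_term i :
  P.-integrable setT (EFin \o (fun w => ((delta * dotv g (u w)) *: u w) 0 i)).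
Proof.
apply: eq_integrable (integrableZl_EFin delta (E_int g i)) => // w _.
by rewrite /= mxE mulrA.
Qed.

Lemma vexp_gradient_estimate_subE :
  vexp P (fun w => est (u w)) - g
  = vexp P (fun w => est (u w) - (delta * dotv g (u w)) *: u w).
Proof.
rewrite vexpB //; [|exact: integrable_gradient_estimate|exact: integrable_directional_term].
rewrite (_ : (fun w => _ *: u w) = fun w => delta *: (dotv g (u w) *: u w)).
  have Eg : vexp P (fun w => dotv g (u w) *: u w) = delta^-1 *: g := E_eq g.
  rewrite vexpZ ?Eg ?scalerA ?mulfV ?gt_eqF ?scale1r // => i.
  by apply: eq_integrable (E_int g i) => // w _; rewrite /= mxE.
by apply: funext => w; rewrite scalerA.
Qed.

Lemma smoothed_gradient_bias_le :
  ((D (vexp P (fun w => est (u w)) - g))%:E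
   <= (delta * nu * C ^+ 2 * L / 2)%:E * Eexp P (fun w => D (u w) ^+ 3)%R)%E.
Proof.
have [L0|/remainder_neg_trivial v0] := leP 0 L; last first.
  rewrite (v0 (_ - _)) (dual_norm0 hN hNC).
  under eq_fun do rewrite (v0 (u _)) (dual_norm0 hN hNC) expr0n /=.
  by rewrite /Eexp integral0 mule0.
have c0 : 0 <= delta * nu * C ^+ 2 * L / 2.
  by rewrite divr_ge0 // mulr_ge0 // mulr_ge0 ?sqr_ge0 // mulr_ge0 // ltW.
have mD := measurable_dual_norm hN hNC u_meas.
have mD3 : measurable_fun setT (fun w => D (u w) ^+ 3) by exact: measurable_funX.
have D3_ge0 w : 0 <= D (u w) ^+ 3 by rewrite exprn_ge0 // (dual_norm_ge0 hN hNC).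
rewrite vexp_gradient_estimate_subE -(EexpZ P mD3 D3_ge0 c0) /Eexp.
apply: (dual_norm_vexp_le hN) => [i||s w Ns]; last exact: gradient_estimate_bias_le.
- apply: eq_integrable (integrableB_EFin (integrable_gradient_estimate i)
    (integrable_directional_term i)) => // w _.
  by rewrite /= !mxE.
- exact: measurable_funM.
Qed.

End GradientEstimate.

Theorem lemma2
  (R : realType) (n : nat)
  (N : 'rV[R]_n -> R) (hN : is_norm N)
  (C : R) (hC : 0 < C) (hNC : forall x, N x <= C * dual_norm N x)
  (* the random parameter xi and the stochastic functions f(.;xi) *)
  (dXi : measure_display) (Xi : measurableType dXi) (PXi : probability Xi R)
  (F : 'rV[R]_n -> Xi -> R) (gF : 'rV[R]_n -> Xi -> 'rV[R]_n) (G L : R)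
  (* Assumption (A) *)
  (A_diff : forall xi x, differentiable (fun y => F y xi) x)
  (A_grad : forall xi x h, 'd (fun y => F y xi) x h = dotv (gF x xi) h)
  (A_lip : forall xi x y, `|F x xi - F y xi| <= G * N (x - y))
  (A_smooth : forall xi x y, dual_norm N (gF x xi - gF y xi) <= L * N (x - y))
  (* f(x) = E_xi[f(x;xi)] is well defined, differentiable with gradient gf *)
  (f_int : forall x, PXi.-integrable setT (fun xi => (F x xi)%:E))
  (gf : 'rV[R]_n -> 'rV[R]_n)
  (f_diff : forall x, differentiable (fun y => Rexp PXi (F y)) x)
  (f_grad : forall x h, 'd (fun y => Rexp PXi (F y)) x h = dotv (gf x) h)
  (* Assumption (B) *)
  (B_int : forall x i, PXi.-integrable setT (fun xi => (gF x xi 0 i)%:E))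
  (B_eq : forall x, vexp PXi (gF x) = gf x)
  (* Assumption (E): u ~ D is a random vector on a probability space *)
  (dOm : measure_display) (Om : measurableType dOm) (P : probability Om R)
  (u : Om -> 'rV[R]_n) (u_meas : forall i, measurable_fun setT (fun w => u w 0 i))
  (delta : R) (hdelta : 0 < delta)
  (E_int : forall g i, P.-integrable setT (fun w => (dotv g (u w) * u w 0 i)%:E))
  (E_eq : forall g, vexp P (fun w => dotv g (u w) *: u w) = delta^-1 *: g)
  (nu : R) (hnu : 0 < nu) :
  forall x : 'rV[R]_n,
    ((dual_norm N
        (vexp P (fun w => (delta / nu * (Rexp PXi (F (x + nu *: u w))
                                         - Rexp PXi (F x))) *: u w) - gf x))%:E
      <= (delta * nu * C ^+ 2 * L / 2)%:E
         * Eexp P (fun w => dual_norm N (u w) ^+ 3)%R)%E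
    /\
    (forall xi : Xi,
      (Eexp P (fun w => dual_norm N
                 ((delta / nu * (F (x + nu *: u w) xi - F x xi)) *: u w) ^+ 2)%R
       <= (C ^+ 4 * L ^+ 2 * delta ^+ 2 * nu ^+ 2 / 2)%:E
            * Eexp P (fun w => dual_norm N (u w) ^+ 6)%R
          + (2 * delta ^+ 2)%:E
            * Eexp P (fun w => dotv (gF x xi) (u w) ^+ 2 * dual_norm N (u w) ^+ 2)%R)%E).
Proof.
move=> x; pose f y := Rexp PXi (F y).
have F_rem xi := taylor_remainder_le hN hNC (A_diff xi) (A_grad xi) (A_smooth xi) x.
have f_lip a b : `|f a - f b| <= G * N (a - b).
  rewrite /f -(RexpB (f_int a) (f_int b)).
  apply: (Rexp_abs_le (P := PXi)) => [|xi]; last exact: A_lip.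
  exact: integrableB_EFin (f_int a) (f_int b).
have f_rem h : `|f (x + h) - f x - dotv (gf x) h| <= L * N h ^+ 2 / 2.
  have Idot := integrable_dotv h (B_int x).
  have Idiff := integrableB_EFin (f_int (x + h)) (f_int x).
  rewrite -B_eq -(Rexp_dotv h (B_int x)) /f -(RexpB (f_int _) (f_int _)) -(RexpB Idiff Idot).
  apply: (Rexp_abs_le (P := PXi)) => [|xi]; last exact: F_rem.
  exact: integrableB_EFin Idiff Idot.
split; first exact: (smoothed_gradient_bias_le hN hNC hdelta hnu f_lip f_rem u_meas E_int E_eq).
by move=> xi; exact: (smoothed_gradient_second_moment_le hN hNC delta hnu (A_lip xi) (F_rem xi)).
Qed.
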